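(* Let $\mathfrak R$ be either a cubical iterated graph system $\mathfrak R\subseteq\mathfrak R(d_*,L_*,s_* )$ with $d_*\ge2$, or the pentagonal Sierpiński carpet iterated graph system, with replacement graphs $G_m$. Then for every $M>0$ there exist $m\in\mathbb N$ and a type $t$ such that the family $\Theta_t^{(m)}$ of all paths in $G_m$ from $I_{t,-}^{(m)}$ to $I_{t,+}^{(m)}$ contains at least $M$ pairwise (vertex-)disjoint paths.
   Context: Graphs: $(V,E)$, $V$ finite non-empty, $E\subseteq V\times V$, $(x,y)\in E\Rightarrow(y,x)\notin E$; $\{x,y\}\in E$ means either orientation; a path is a sequence $[x_1,\dots,x_k]$ with $\{x_i,x_{i+1}\}\in E$; a path from $A$ to $B$ has $x_1\in A$, $x_k\in B$. An iterated graph system (IGS) $\mathfrak R$: connected graph $G_1=(S,E)$, finite type set $\mathcal T$, surjective typing $\mathfrak t:E\to\mathcal T$, non-empty gluing rules $I_t\subseteq S\times S$; $I_{t,+}$, $I_{t,-}$ are the sets of first, resp. second, coordinates of $I_t$ and $I^{(m)}_{t,\star}=(I_{t,\star})^m\subseteq W_m$. With $W_m=S^m$, $[w]_k=w_1\cdots w_k$, replacement graphs $G_m=(W_m,E_m)$: $(w,v)\in E_{m+1}$ iff (1) $[w]_m=[v]_m$ and $(w_{m+1},v_{m+1})\in E$ (type $\mathfrak t(w_{m+1},v_{m+1})$), or (2) $([w]_m,[v]_m)\in E_m$ and $(w_{m+1},v_{m+1})\in I_{\mathfrak t([w]_m,[v]_m)}$ (type $\mathfrak t([w]_m,[v]_m)$).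 Mapping of IGS $\varphi:\mathfrak R\to\mathfrak R'$: graph mapping $G_1\to G_1'$ (edges to edges or collapsed) with (i) if $\varphi(w_1)=\varphi(v_1)$ for an edge of type $t$ then $\varphi(w_2)=\varphi(v_2)$ for all $(w_2,v_2)\in I_t$; (ii) if $(w_1,v_1)\in E$ of type $t$ and $(\varphi(w_1),\varphi(v_1))\in E'$ of type $t'$ then $(\varphi(w_2),\varphi(v_2))\in I'_{t'}$ for $(w_2,v_2)\in I_t$; (iii) if $(w_1,v_1)\in E$ of type $t$ and $(\varphi(v_1),\varphi(w_1))\in E'$ of type $t'$ then $(\varphi(v_2),\varphi(w_2))\in I'_{t'}$ for $(w_2,v_2)\in I_t$. Isomorphism of IGS: graph isomorphism with it and its inverse mappings of IGS; sub-system: $S\subseteq S'$, same types, inclusion a mapping of IGS. Cubical IGS: for integers $d_*\ge1,s_*\ge1,L_*\ge3$, $\mathfrak R(d_*,L_*,s_* )$ has symbols $\{1,\dots,L_*\}^{d_*}\times\{\underline1,\dots,\underline{s_*}\}$ with coordinates $c_i$, sheet $s$; types $t_1,\dots,t_{d_*}$; $(w,v)$ edge of type $t_j$ iff $c_i(v)=c_i(w)$ ($i\neq j$), $c_j(v)=c_j(w)+1$; $(w,v)\in I_{t_j}$ iff $c_i(w)=c_i(v)$ ($i\neq j$), $(c_j(w),c_j(v))=(L_*,1)$, $s(w)=s(v)$. Sheet- and other-coordinate-preserving maps: $\eta_j:c_j\mapsto L_*+1-c_j$; $\alpha^+_{j,k}$ ($j\ne k$) swaps $c_j,c_k$; $\alpha^-_{j,k}$: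 $c_k\mapsto L_*+1-c_j$, $c_j\mapsto L_*+1-c_k$; $\mathcal G$ the set of these. A cubical IGS is a sub-system $\mathfrak R\subseteq\mathfrak R(d_*,L_*,s_* )$ with (C1) for each $j$, every symbol with $c_i\in\{1,L_*\}$ ($i\ne j$) and sheet $\underline1$ (condition $(\ast_j)$) is in $S(\mathfrak R)$; (C2) if $w,v$ satisfy $(\ast_j)$, agree off coordinate $j$, and $c_j(v)=c_j(w)+1$, then $(w,v)\in E(\mathfrak R)$; (C3) if $w,v$ satisfy $(\ast_j)$, agree off coordinate $j$, and $(c_j(w),c_j(v))=(L_*,1)$, then $(w,v)\in I_{t_j}(\mathfrak R)$; (C4) each $\alpha\in\mathcal G$ restricts to an isomorphism of IGS $\mathfrak R\to\mathfrak R$. Pentagonal Sierpiński carpet: $S=\{0,\dots,4\}$, $E=\{(0,1),(1,2),(2,3),(3,4),(4,0)\}$ of types $a,b,c,d,e$, $I_a=\{(1,0),(2,4)\}$, $I_b=\{(2,1),(3,0)\}$, $I_c=\{(3,2),(4,1)\}$, $I_d=\{(4,3),(0,2)\}$, $I_e=\{(0,4),(1,3)\}$. *)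

From mathcomp Require Import all_boot.
Set Implicit Arguments. Unset Strict Implicit. Unset Printing Implicit Defensive.

(* Symbols live in a carrier finType X; the symbol set S is the set     *)
(* [isym R] inside X.  [iEt R x y = Some t] means (x,y) in E with type  *)
(* t (this packages E and the typing map t : E -> T).  [iI R t] is the  *)
(* gluing rule I_t, a relation on X.                                    *)
Record igs (X T : finType) := IGS {
  isym : {set X};
  iEt  : X -> X -> option T;
  iI   : T -> rel X }.

Section IGS.
Variables (X T : finType) (R : igs X T).

Definition iE (x y : X) : bool := iEt R x y != None.
Definition iadj (x y : X) : bool := iE x y || iE y x.

Definition is_igs : Prop :=
  isym R != set0 /\
  (forall x y, iE x y -> (x \in isym R) && (y \in isym R)) /\
  (forall x y, iE x y -> ~~ iE y x) /\
  (forall x y, x \in isym R -> y \in isym R -> connect iadj x y) /\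
  (forall t, exists x y, iEt R x y = Some t) /\
  (forall t, exists x y, iI R t x y) /\
  (forall t x y, iI R t x y -> (x \in isym R) && (y \in isym R)).

(* Edge types in G_m, on REVERSED words (head = last letter w_m):       *)
(* rule (1): equal prefixes and (w_{m+1},v_{m+1}) in E;                 *)
(* rule (2): prefixes form an edge of type t and (w_{m+1},v_{m+1}) in   *)
(*           I_t.                                                        *)
Fixpoint Etw (w v : seq X) : option T :=
  match w, v with
  | a :: w', b :: v' =>
      if w' == v' then iEt R a b
      else match Etw w' v' with
           | Some t => if iI R t a b then Some t else None
           | None => None
           end
  | _, _ => None
  end.

Definition Wm (m : nat) : {set m.-tuple X} :=
  [set w : m.-tuple X | all (fun a => a \in isym R) w].
Definition Em (m : nat) (w v : m.-tuple X) : bool :=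
  Etw (rev w) (rev v) != None.
Definition adjm (m : nat) (w v : m.-tuple X) : bool := Em w v || Em v w.

Definition Iplus (t : T) : pred X := fun x => [exists y, iI R t x y].
Definition Iminus (t : T) : pred X := fun y => [exists x, iI R t x y].
Definition Iword (P : pred X) (m : nat) : pred (m.-tuple X) :=
  fun w => all P w.

Definition gpath (m : nat) (A B : pred (m.-tuple X)) (p : seq (m.-tuple X))
  : bool :=
  if p is x :: p' then
    [&& all (fun w => w \in Wm m) p, A x, path (@adjm m) x p' & B (last x p')]
  else false.

Definition Theta (m : nat) (t : T) (p : seq (m.-tuple X)) : bool :=
  @gpath m (@Iword (Iminus t) m) (@Iword (Iplus t) m) p.

Definition many_disjoint_paths : Prop :=
  forall M : nat, 0 < M ->
  exists (m : nat) (t : T) (P : 'I_M -> seq (m.-tuple X)),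
    (forall i, Theta t (P i)) /\
    (forall i j, i != j -> forall x, x \in P i -> x \notin P j).
End IGS.

Definition igs_mapping (X T X' T' : finType) (R : igs X T) (R' : igs X' T')
  (f : X -> X') : Prop :=
  (forall x, x \in isym R -> f x \in isym R') /\
  (forall x y, iE R x y -> f x = f y \/ iadj R' (f x) (f y)) /\
  (forall x y t, iEt R x y = Some t -> f x = f y ->
     forall a b, iI R t a b -> f a = f b) /\
  (forall x y t t', iEt R x y = Some t -> iEt R' (f x) (f y) = Some t' ->
     forall a b, iI R t a b -> iI R' t' (f a) (f b)) /\
  (forall x y t t', iEt R x y = Some t -> iEt R' (f y) (f x) = Some t' ->
     forall a b, iI R t a b -> iI R' t' (f b) (f a)).

Definition igs_iso (X T X' T' : finType) (R : igs X T) (R' : igs X' T')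
  (f : X -> X') : Prop :=
  exists g : X' -> X,
    igs_mapping R R' f /\ igs_mapping R' R g /\
    (forall x, x \in isym R -> g (f x) = x) /\
    (forall y, y \in isym R' -> f (g y) = y) /\
    (forall x y, x \in isym R -> y \in isym R ->
       iadj R x y = iadj R' (f x) (f y)).

Definition subsystem (X T : finType) (R R' : igs X T) : Prop :=
  isym R \subset isym R' /\ igs_mapping R R' id.

(* Cubical IGS R(d,L,s).  Coordinates are 0-based: the ordinal c : 'I_L *)
(* stands for the coordinate value c+1 in {1..L}; the sheet o : 'I_s   *)
(* stands for \underline{o+1}.  Type t_j is j : 'I_d (0-based).         *)
Definition Sym (d L s : nat) : finType :=
  ({ffun 'I_d -> 'I_L} * 'I_s)%type.

Section Cube.
Variables d L s : nat.
Implicit Types (w v x : Sym d L s) (j k : 'I_d).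

Definition coord x j : nat := val (x.1 j).
Definition agree_off j w v : bool := [forall i, (i != j) ==> (w.1 i == v.1 i)].

Definition cube_Et w v : option 'I_d :=
  [pick j | agree_off j w v && (coord v j == (coord w j).+1)].
Definition cube_I (j : 'I_d) : rel (Sym d L s) := fun w v =>
  [&& agree_off j w v, coord w j == L.-1, coord v j == 0 & w.2 == v.2].
Definition bigcube : igs (Sym d L s) 'I_d :=
  IGS [set: Sym d L s] cube_Et cube_I.

Definition star j x : bool :=
  [forall i, (i != j) ==> ((coord x i == 0) || (coord x i == L.-1))]
  && (val x.2 == 0).

Definition eta j x : Sym d L s :=
  ([ffun i => if i == j then rev_ord (x.1 i) else x.1 i], x.2).
Definition alphaP j k x : Sym d L s :=
  ([ffun i => if i == j then x.1 k else if i == k then x.1 j else x.1 i], x.2).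
Definition alphaM j k x : Sym d L s :=
  ([ffun i => if i == j then rev_ord (x.1 k)
              else if i == k then rev_ord (x.1 j) else x.1 i], x.2).

Definition cubical_igs (R : igs (Sym d L s) 'I_d) : Prop :=
  is_igs R /\ subsystem R bigcube /\
  (forall j x, star j x -> x \in isym R) /\
  (forall j w v, star j w -> star j v -> agree_off j w v ->
     coord v j = (coord w j).+1 -> iE R w v) /\
  (forall j w v, star j w -> star j v -> agree_off j w v ->
     coord w j = L.-1 -> coord v j = 0 -> iI R j w v) /\
  (forall j, igs_iso R R (eta j)) /\
  (forall j k, j != k -> igs_iso R R (alphaP j k)) /\
  (forall j k, j != k -> igs_iso R R (alphaM j k)).
End Cube.

(* Pentagonal Sierpinski carpet: S = {0..4}, types a..e = 0..4.        *)
Definition pent_Et (x y : 'I_5) : option 'I_5 :=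
  if (val x, val y) \in [:: (0,1); (1,2); (2,3); (3,4); (4,0)]
  then Some x else None.
Definition pent_I (t : 'I_5) : rel 'I_5 := fun x y =>
  (val t, val x, val y) \in
    [:: (0,1,0); (0,2,4);
        (1,2,1); (1,3,0);
        (2,3,2); (2,4,1);
        (3,4,3); (3,0,2);
        (4,0,4); (4,1,3)].
Definition pentagon : igs 'I_5 'I_5 := IGS [set: 'I_5] pent_Et pent_I.

From mathcomp Require Import all_boot.
Set Implicit Arguments. Unset Strict Implicit. Unset Printing Implicit Defensive.

(* If Q is a path of G_{m-1} from u to v with (v_i, u_i) in I_t for every i,
   and a_0, ..., a_k is a walk of t-edges of G_1, then the copies
   a_0 Q, ..., a_k Q concatenate into a path of G_m from a_0 u to a_k v, and
   its endpoints have the same shape again.  Choosing one of two such walks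
   of G_1 at each of the m levels gives 2^m paths of Theta_t^(m), and they are
   vertex-disjoint as soon as the choices can be read off every vertex.
   In a cubical system take the two lines in direction t_j with c_k = 1 and
   c_k = L_* (k <> j, which needs d_* >= 2); c_k records the choice.  In the
   pentagon take 0 -> 1 or 4 -> 3 -> 2: copies 4 and 2 carry reversed copies
   of the paths rotated by 3 and 2, rotations mapping the gluing rule I_a to
   I_d and I_c respectively, and the first letter records the choice. *)

Lemma all2_rev (A B : Type) (r : A -> B -> bool) s t :
  all2 r (rev s) (rev t) = all2 r s t.
Proof.
rewrite !all2E !size_rev; case: eqP => //= eq_st.
by rewrite -rev_zip // all_rev.
Qed.

Lemma all2_map2 (A B C : Type) (r : B -> C -> bool) (f : A -> B) (g : A -> C) s :
  all2 r (map f s) (map g s) = all (fun x => r (f x) (g x)) s.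
Proof. by elim: s => //= x s ->. Qed.

Lemma path_iota (e : rel nat) m k :
  (forall i, m <= i < m + k -> e i i.+1) -> path e m (iota m.+1 k).
Proof.
elim: k m => [|k IH] m //= ek; rewrite ek ?leqnn ?addnS ?ltnS ?leq_addr //=.
by apply: IH => i /andP[mi ik]; apply: ek; rewrite ltnW //= -addSnnS.
Qed.

Lemma mem_map_cons (A : eqType) (a x : A) w (Q : seq (seq A)) :
  (x :: w \in [seq a :: v | v <- Q]) = (x == a) && (w \in Q).
Proof.
apply/mapP/andP => [[v vQ [-> ->]]|[/eqP-> wQ]]; first by rewrite eqxx.
by exists w.
Qed.

Section Walks.
Variables (X T : finType) (R : igs X T).

Lemma Etw_size W V : Etw R W V != None -> size W = size V.
Proof.
elim: W V => [|a W IH] [|b V] //=.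
case: (W =P V) => [-> //|_]; case E: (Etw R W V) => [t|] //= _.
by rewrite (IH V) // E.
Qed.

Lemma Etw_rcons W V a : Etw R W V != None ->
  Etw R (rcons W a) (rcons V a) = Etw R W V.
Proof.
elim: W V => [|x W IH] [|y V] //=; rewrite eqseq_rcons eqxx andbT.
case: (W =P V) => // _; case E: (Etw R W V) => [t|] //= _.
by rewrite IH ?E.
Qed.

Lemma Etw_rcons_glue W V a b t : iEt R a b = Some t -> a != b ->
  all2 (iI R t) W V -> Etw R (rcons W a) (rcons V b) = Some t.
Proof.
move=> ab /negbTE neq_ab; elim: W V => [|x W IH] [|y V] //= /andP[xy WV].
by rewrite eqseq_rcons neq_ab andbF IH // xy.
Qed.

(* [Etw] reads words last letter first. *)
Definition wadj (w v : seq X) : bool :=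
  (Etw R (rev w) (rev v) != None) || (Etw R (rev v) (rev w) != None).

Lemma wadj_sym : symmetric wadj.
Proof. by move=> w v; rewrite /wadj orbC. Qed.

Lemma wadj_size w v : wadj w v -> size w = size v.
Proof. by case/orP => /Etw_size; rewrite !size_rev. Qed.

Lemma wadj_cons a w v : wadj w v -> wadj (a :: w) (a :: v).
Proof.
by rewrite /wadj !rev_cons => /orP[] E; rewrite (Etw_rcons _ E) E ?orbT.
Qed.

Lemma wadj_glue a b t w v : iEt R a b = Some t -> a != b ->
  all2 (iI R t) w v -> wadj (a :: w) (b :: v).
Proof.
by move=> ab neq_ab wv; rewrite /wadj !rev_cons (Etw_rcons_glue ab) ?all2_rev.
Qed.

Definition walk (u v : seq X) (P : seq (seq X)) : bool :=
  if P is x :: P' then [&& x == u, path wadj x P' & last x P' == v] else false.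

Lemma walk_cat u v u' v' P Q :
  walk u v P -> walk u' v' Q -> wadj v u' -> walk u v' (P ++ Q).
Proof.
case: P => [|x P] //; case: Q => [|y Q] //.
move=> /and3P[xu pP /eqP lP] /and3P[/eqP-> pQ lQ] vu' /=.
by rewrite xu cat_path pP last_cat lP /= vu' pQ.
Qed.

Lemma walk_rev u v P : walk u v P -> walk v u (rev P).
Proof.
case: P => [|x P] // /and3P[/eqP-> pP /eqP <-].
rewrite lastI rev_rcons /= eqxx rev_path -(last_cons u (last u P)).
rewrite -rev_rcons -lastI rev_cons last_rcons eqxx andbT.
by rewrite (eq_path (e' := wadj)) // => w w'; rewrite wadj_sym.
Qed.

Lemma walk_map (f : seq X -> seq X) u v P :
  {homo f : w w' / wadj w w'} -> walk u v P -> walk (f u) (f v) (map f P).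
Proof.
move=> fh; case: P => [|x P] // /and3P[/eqP-> pP /eqP <-].
by rewrite /= eqxx last_map eqxx path_map andbT (sub_path fh).
Qed.

Lemma walk_size u v P : walk u v P -> {in P, forall w, size w = size u}.
Proof.
case: P => [|x P] // /and3P[/eqP-> pP _].
elim: P u pP => [|y P IH] u /=; first by move=> _ w; rewrite inE => /eqP->.
case/andP=> /wadj_size uy yP w; rewrite inE => /orP[/eqP-> //|].
by rewrite uy; apply: IH.
Qed.

Definition typed_edge (t : T) : rel X :=
  fun a b => (iEt R a b == Some t) && (a != b).

Lemma walk_copies t u v Q a ls :
  walk u v Q -> all2 (iI R t) v u -> path (typed_edge t) a ls ->
  walk (a :: u) (last a ls :: v) [seq x :: w | x <- a :: ls, w <- Q].
Proof.
move=> wQ vu; elim: ls a => [|b ls IH] a.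
  by rewrite allpairs1l => _; apply: (walk_map (f := cons a)) wQ; apply: wadj_cons.
case/andP=> /andP[/eqP ab neq_ab] p; rewrite allpairs_cons.
apply: walk_cat (IH _ p) _; first by apply: (walk_map (f := cons a)) wQ; apply: wadj_cons.
exact: wadj_glue ab neq_ab vu.
Qed.

Lemma Theta_walk t m (tup : seq X -> m.-tuple X) u v P :
  {in P, forall w, tup w = w :> seq X} -> all (all (mem (isym R))) P ->
  all (Iminus R t) u -> all (Iplus R t) v -> walk u v P -> Theta R t (map tup P).
Proof.
case: P => [|x P] // tupK symP um vp /and3P[/eqP xu pP /eqP lP].
have inWm w : w \in x :: P -> tup w \in Wm R m.
  by move=> wP; rewrite inE (tupK w wP); apply: (allP symP).
rewrite /Theta /gpath /=; apply/and4P; split.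
- rewrite inWm ?mem_head //=; apply/allP => _ /mapP[w wP ->].
  by apply: inWm; rewrite inE wP orbT.
- by rewrite /Iword (tupK x (mem_head _ _)) xu.
- rewrite path_map; apply: (sub_in_path (P := fun w => w \in x :: P)) pP; last exact/allP.
  by move=> w w' wP w'P; rewrite /relpre /adjm /Em /= (tupK w wP) (tupK w' w'P).
- by rewrite /Iword last_map (tupK _ (mem_last _ _)) lP.
Qed.

Lemma many_disjoint_paths_of_walks t (sa da : bool -> X) (W : seq bool -> seq (seq X)) :
  (forall c, iI R t (da c) (sa c)) ->
  (forall s, walk (map sa s) (map da s) (W s)) ->
  (forall s, all (all (mem (isym R))) (W s)) ->
  (forall s s' w, w \in W s -> w \in W s' -> s = s') ->
  many_disjoint_paths R.
Proof.
move=> glue walkW symW injW M _.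
pose code (i : 'I_M) := mkseq (fun k => k == i) M.
have code_inj : injective code.
  move=> i i' /(congr1 (nth false ^~ i)); rewrite !nth_mkseq // eqxx.
  by move/esym/eqP/val_inj.
pose tup (w : seq X) : M.-tuple X := insubd (nseq_tuple M (sa false)) w.
have tupK i : {in W (code i), forall w, tup w = w :> seq X}.
  move=> w wW; rewrite insubdK // unfold_in /= (walk_size (walkW _) wW).
  by rewrite size_map size_mkseq.
exists M, t, (fun i => map tup (W (code i))); split=> [i|i i' neq_ii' _ /mapP[w wW ->]].
  apply: Theta_walk (walkW _) => //; apply/allP => _ /mapP[c _ ->]; apply/existsP.
    by exists (da c).
  by exists (sa c).
apply/mapP => -[w' w'W /(congr1 val)] /=.
rewrite (tupK _ w wW) (tupK _ w' w'W) => eq_ww'; move: w'W.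
by rewrite -eq_ww' => /(injW _ _ _ wW)/code_inj/eqP; rewrite (negbTE neq_ii').
Qed.

End Walks.

Section IgsMorphism.
Variables (X T X' T' : finType) (R : igs X T) (R' : igs X' T').
Variables (f : X -> X') (g : T -> T').
Hypothesis f_inj : injective f.
Hypothesis f_edge : forall x y, iEt R' (f x) (f y) = omap g (iEt R x y).
Hypothesis f_glue : forall t x y, iI R' (g t) (f x) (f y) = iI R t x y.

Lemma Etw_map W V : Etw R' (map f W) (map f V) = omap g (Etw R W V).
Proof.
elim: W V => [|a W IH] [|b V] //=; rewrite (inj_eq (inj_map f_inj)).
case: (W =P V) => // _; rewrite IH; case: (Etw R W V) => [t|] //=.
by rewrite f_glue; case: ifP.
Qed.

Lemma wadj_map w v : wadj R' (map f w) (map f v) = wadj R w v.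
Proof.
by rewrite /wadj -!map_rev !Etw_map; case: (Etw R _ _); case: (Etw R _ _).
Qed.

End IgsMorphism.

Lemma cube_Et_step d L s (w v : Sym d L s) j :
  agree_off j w v -> coord v j = (coord w j).+1 -> cube_Et w v = Some j.
Proof.
move=> wv vw; rewrite /cube_Et; case: pickP => [j' /andP[/forallP wv' _]|/(_ j)].
  apply/congr1/eqP; apply: contraT => neq_jj'.
  move: (wv' j); rewrite eq_sym neq_jj' => /eqP/(congr1 val).
  by rewrite -/(coord w j) -/(coord v j) vw => /n_Sn.
by rewrite wv vw eqxx.
Qed.

(* Coordinates range over 0..n, so n = L_* - 1. *)
Section Cubical.
Variables (d n s : nat) (R : igs (Sym d n.+1 s.+1) 'I_d).
Hypotheses (n_gt0 : 0 < n) (cubR : cubical_igs R).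

(* (C2) only provides an edge; its type is forced by sending the gluing pair
   (e, o) of I_t below through the inclusion into the full cubical system. *)
Lemma cubical_edge_type w v t j :
  iEt R w v = Some t -> agree_off j w v -> coord v j = (coord w j).+1 -> t = j.
Proof.
have [_ [[_ [_ [_ [_ [incl_glue _]]]]]] [_ [_ [glueR _]]]] := cubR.
move=> wv_t wv vw.
pose e : Sym d n.+1 s.+1 := ([ffun i => if i == t then ord_max else ord0], ord0).
pose o : Sym d n.+1 s.+1 := ([ffun => ord0], ord0).
have eo : iI R t e o.
  apply: glueR; rewrite /coord ?ffunE ?eqxx //.
  - apply/andP; split=> //; apply/forallP => i; apply/implyP => /negbTE it.
    by rewrite /coord ffunE it eqxx.
  - apply/andP; split=> //; apply/forallP => i; apply/implyP => _.
    by rewrite /coord ffunE eqxx.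
  - by apply/forallP => i; apply/implyP => /negbTE it; rewrite !ffunE it.
have /and4P[_ /eqP] := incl_glue _ _ _ _ wv_t (cube_Et_step wv vw) _ _ eo.
rewrite /coord ffunE; case: eqP => // _ /= n0.
by move: n_gt0; rewrite -n0.
Qed.

Variables (j k : 'I_d).
Hypothesis neq_jk : j != k.

Definition cube_pt (i : nat) (b : bool) : Sym d n.+1 s.+1 :=
  ([ffun i' => if i' == j then inord i else if (i' == k) && b then ord_max else ord0],
   ord0).

Lemma coord_cube_pt_j i b : i <= n -> coord (cube_pt i b) j = i.
Proof. by move=> le_in; rewrite /coord ffunE eqxx /= inordK. Qed.

Lemma coord_cube_pt_k i b : coord (cube_pt i b) k = if b then n else 0.
Proof. by rewrite /coord ffunE eq_sym (negbTE neq_jk) eqxx; case: b. Qed.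

Lemma star_cube_pt i b : star j (cube_pt i b).
Proof.
apply/andP; split=> //; apply/forallP => i'; apply/implyP => /negbTE i'j.
by rewrite /coord ffunE i'j; case: ifP; rewrite eqxx ?orbT.
Qed.

Lemma agree_cube_pt i i' b : agree_off j (cube_pt i b) (cube_pt i' b).
Proof. by apply/forallP => l; apply/implyP => /negbTE lj; rewrite !ffunE lj. Qed.

Lemma cube_pt_edge i b : i < n -> typed_edge R j (cube_pt i b) (cube_pt i.+1 b).
Proof.
have [_ [_ [_ [edgeR _]]]] := cubR.
move=> lt_in; have step : coord (cube_pt i.+1 b) j = (coord (cube_pt i b) j).+1.
  by rewrite !coord_cube_pt_j // ltnW.
have := edgeR _ _ _ (star_cube_pt i b) (star_cube_pt i.+1 b) (agree_cube_pt _ _ _) step.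
rewrite /typed_edge /iE; case E: iEt => [t|] // _.
rewrite (cubical_edge_type E (agree_cube_pt _ _ _) step) eqxx /=.
by apply/eqP => /(congr1 (fun x => coord x j)); rewrite step => /n_Sn.
Qed.

Lemma cube_pt_glue b : iI R j (cube_pt n b) (cube_pt 0 b).
Proof.
have [_ [_ [_ [_ [glueR _]]]]] := cubR.
by apply: glueR; rewrite ?star_cube_pt ?agree_cube_pt ?coord_cube_pt_j.
Qed.

Fixpoint cube_walk (sg : seq bool) : seq (seq (Sym d n.+1 s.+1)) :=
  if sg is b :: sg' then
    [seq x :: w | x <- [seq cube_pt i b | i <- iota 0 n.+1], w <- cube_walk sg']
  else [:: [::]].

Lemma walk_cube_walk sg :
  walk R (map (cube_pt 0) sg) (map (cube_pt n) sg) (cube_walk sg).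
Proof.
elim: sg => [|b sg IH] //=.
have line : path (typed_edge R j) (cube_pt 0 b) [seq cube_pt i b | i <- iota 1 n].
  rewrite -[cube_pt 0 b]/((cube_pt^~ b) 0) path_map.
  by apply: path_iota => i /andP[_ lt_in]; apply: cube_pt_edge.
have := walk_copies IH _ line; rewrite -nth_last size_map size_iota.
rewrite (nth_map 0) ?size_iota ?prednK // nth_iota ?prednK // add1n prednK //.
by apply; rewrite all2_map2; apply/allP => c _; apply: cube_pt_glue.
Qed.

Lemma mem_cube_walk sg w :
  w \in cube_walk sg -> all (star j) w && ([seq coord x k == n | x <- w] == sg).
Proof.
elim: sg w => [|b sg IH] w; first by rewrite inE => /eqP->.
case/allpairsP => -[x w'] [/mapP[i _ ->] /IH /andP[starw' /eqP codew'] ->] /=.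
rewrite starw' codew' star_cube_pt coord_cube_pt_k eqseq_cons eqxx andbT.
by case: b; rewrite ?eqxx // [0 == n]eq_sym gtn_eqF.
Qed.

Lemma cubical_many_disjoint_paths : many_disjoint_paths R.
Proof.
have [_ [_ [symR _]]] := cubR.
apply: (many_disjoint_paths_of_walks cube_pt_glue walk_cube_walk).
  move=> sg; apply/allP => w /mem_cube_walk /andP[/allP starw _].
  by apply/allP => x /starw; apply: symR.
by move=> sg sg' w /mem_cube_walk/andP[_ /eqP <-] /mem_cube_walk/andP[_ /eqP <-].
Qed.

End Cubical.

Definition rot (k : nat) (x : 'I_5) : 'I_5 := Ordinal (ltn_pmod (x + k) (isT : 0 < 5)).

Lemma rot3K : cancel (rot 3) (rot 2).
Proof. by case=> [[|[|[|[|[|?]]]]] ?]; apply: val_inj. Qed.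

Lemma rot2K : cancel (rot 2) (rot 3).
Proof. by case=> [[|[|[|[|[|?]]]]] ?]; apply: val_inj. Qed.

Lemma rot_inj k : injective (rot k).
Proof.
move=> x y /(congr1 val) /= /eqP; rewrite eqn_modDr !modn_small // => /eqP.
exact: val_inj.
Qed.

Local Ltac case_I5 x := case: x => [[|[|[|[|[|?]]]]] ?] //.

Lemma pent_Et_rot k x y : k < 5 ->
  iEt pentagon (rot k x) (rot k y) = omap (rot k) (iEt pentagon x y).
Proof.
case: k => [|[|[|[|[|k]]]]] // _; case_I5 x; case_I5 y; by apply/eqP.
Qed.

Lemma pent_I_rot k t x y : k < 5 ->
  iI pentagon (rot k t) (rot k x) (rot k y) = iI pentagon t x y.
Proof. by case: k => [|[|[|[|[|k]]]]] // _; case_I5 t; case_I5 x; case_I5 y. Qed.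

Lemma wadj_rot k w v : k < 5 ->
  wadj pentagon (map (rot k) w) (map (rot k) v) = wadj pentagon w v.
Proof.
move=> lt_k5; apply: (wadj_map (g := rot k) (@rot_inj k)) => *.
  exact: pent_Et_rot.
exact: pent_I_rot.
Qed.

Local Notation vtx i := (@Ordinal 5 i isT).

(* (pent_dst f c, pent_src f c) is one of the pairs (1, 0), (2, 4) of I_a; the
   flag f swaps them, as rotating a reversed copy of a walk does. *)
Definition pent_src (f c : bool) : 'I_5 := if c (+) f then vtx 4 else vtx 0.
Definition pent_dst (f c : bool) : 'I_5 := if c (+) f then vtx 2 else vtx 1.

Fixpoint pent_walk (f : bool) (s : seq bool) : seq (seq 'I_5) :=
  if s is b :: s' then
    if b (+) f then
      [seq vtx 4 :: w | w <- rev (map (map (rot 3)) (pent_walk (~~ f) s'))] ++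
      [seq vtx 3 :: w | w <- pent_walk f s'] ++
      [seq vtx 2 :: w | w <- rev (map (map (rot 2)) (pent_walk (~~ f) s'))]
    else [seq vtx 0 :: w | w <- pent_walk f s'] ++ [seq vtx 1 :: w | w <- pent_walk f s']
  else [:: [::]].

Lemma walk_pent_walk f s :
  walk pentagon (map (pent_src f) s) (map (pent_dst f) s) (pent_walk f s).
Proof.
elim: s f => [|b s IH] f //=.
have wcons a u v P :
    walk pentagon u v P -> walk pentagon (a :: u) (a :: v) (map (cons a) P).
  by apply: walk_map; apply: wadj_cons.
have wrot k u v P : k < 5 -> walk pentagon u v P ->
    walk pentagon (map (rot k) v) (map (rot k) u) (rev (map (map (rot k)) P)).
  by move=> lt_k5 wP; apply: walk_rev; apply: walk_map wP => w w'; rewrite wadj_rot.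
rewrite [pent_src f b]/pent_src [pent_dst f b]/pent_dst; case: ifP => bf.
- have src_rot : map (rot 3) (map (pent_dst (~~ f)) s) = map (pent_src f) s.
    by rewrite -map_comp; apply: eq_map => c; apply: val_inj; case: c; case: (f).
  have dst_rot : map (rot 2) (map (pent_src (~~ f)) s) = map (pent_dst f) s.
    by rewrite -map_comp; apply: eq_map => c; apply: val_inj; case: c; case: (f).
  have := wcons (vtx 4) _ _ _ (wrot 3 _ _ _ isT (IH (~~ f))); rewrite src_rot => wA.
  have := wcons (vtx 2) _ _ _ (wrot 2 _ _ _ isT (IH (~~ f))); rewrite dst_rot => wC.
  apply: walk_cat wA (walk_cat (wcons _ _ _ _ (IH f)) wC _) _.
    rewrite wadj_sym; apply: (@wadj_glue _ _ _ _ _ (vtx 2)) => //.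
    by rewrite -map_comp all2_map2; apply/allP => c _; case: c; case: (f).
  rewrite wadj_sym; apply: (@wadj_glue _ _ _ _ _ (vtx 3)) => //.
  by rewrite -map_comp all2_map2; apply/allP => c _; case: c; case: (f).
- apply: walk_cat (wcons _ _ _ _ (IH f)) (wcons _ _ _ _ (IH f)) _.
  apply: (@wadj_glue _ _ _ _ _ (vtx 0)) => //; rewrite all2_map2.
  by apply/allP => c _; case: c; case: (f).
Qed.

Lemma mem_rev_rot k k' w (Q : seq (seq 'I_5)) : cancel (rot k) (rot k') ->
  (w \in rev (map (map (rot k')) Q)) = (map (rot k) w \in Q).
Proof.
by move=> rotKk; rewrite mem_rev -{1}(mapK rotKk w) mem_map //; apply/inj_map/rot_inj.
Qed.

Lemma mem_pent_walk_cons f b s x w :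
  (x :: w \in pent_walk f (b :: s)) =
  ((1 < x) == b (+) f) &&
  (if x == vtx 4 then map (rot 2) w \in pent_walk (~~ f) s
   else if x == vtx 2 then map (rot 3) w \in pent_walk (~~ f) s
   else w \in pent_walk f s).
Proof.
rewrite /=; case: ifP => _; rewrite !mem_cat !mem_map_cons.
  rewrite (mem_rev_rot _ _ rot3K) (mem_rev_rot _ _ rot2K).
  by case_I5 x; rewrite /= ?andbF ?orbF.
by case_I5 x; rewrite /= ?andbF ?orbF.
Qed.

Lemma pent_walk_inj f s s' w :
  w \in pent_walk f s -> w \in pent_walk f s' -> s = s'.
Proof.
move=> ws ws'.
move: (walk_size (walk_pent_walk f s) ws) (walk_size (walk_pent_walk f s') ws').
rewrite !size_map; elim: s s' f w ws ws' => [|b s IH] [|b' s'] f [|x w] // + + [sw] [sw'].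
rewrite !mem_pent_walk_cons => /andP[/eqP xb wP] /andP[/eqP xb' wP'].
have eq_bb' : b = b' by apply: (@addIb f); rewrite -xb -xb'.
rewrite eq_bb'; congr (_ :: _); move: wP wP'.
by case: (x == _); [|case: (x == _)] => wP wP'; apply: IH wP wP' _ _; rewrite ?size_map.
Qed.

Lemma pentagon_many_disjoint_paths : many_disjoint_paths pentagon.
Proof.
apply: (many_disjoint_paths_of_walks (t := vtx 0) _ (walk_pent_walk false) _
                                     (@pent_walk_inj false)); first by case.
by move=> s; apply/allP => w _; apply/allP => x _; rewrite inE.
Qed.

Theorem proposition7p4 :
  (forall (d L s : nat) (R : igs (Sym d L s) 'I_d),
     2 <= d -> 3 <= L -> 1 <= s -> cubical_igs R ->
     many_disjoint_paths R) /\
  many_disjoint_paths pentagon.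
Proof.
split; last exact: pentagon_many_disjoint_paths.
move=> d [|n] [|s] R d_ge2 L_ge3 _ cubR //.
exact: (cubical_many_disjoint_paths (ltnW L_ge3) cubR
          (j := Ordinal (ltnW d_ge2)) (k := Ordinal d_ge2)).
Qed.
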